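(* Let $\theta\ge0$ and $\omega\ge0$. For arbitrary $\varphi,f\in\mathcal P^+$, the polynomial $\varphi(\Delta_{\theta,\omega})f=\sum_{k\ge0}\frac{\varphi^{(k)}(0)}{k!}\Delta_{\theta,\omega}^kf$ also belongs to $\mathcal P^+$.
   Context: $D=d/dz$, $\Delta_{\theta,\omega}=(\theta+\omega z)D+zD^2$. $\mathcal P^+$ is the set of complex polynomials of the form $C\prod_{j=1}^m(z+\pi_j)$ with $C\in\mathbb C$, $m\in\mathbb N_0$, $\pi_j\ge0$ (i.e. polynomials all of whose zeros are real and nonpositive, including constants and the zero polynomial). *)

From HB Require Import structures.
From mathcomp Require Import all_boot all_order all_algebra.
From mathcomp Require Import complex.
Set Implicit Arguments. Unset Strict Implicit. Unset Printing Implicit Defensive.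
Import Order.TTheory GRing.Theory Num.Theory.
Local Open Scope ring_scope.
Local Open Scope complex_scope.

(* P^+ : polynomials C * prod_j (z + pi_j) with C complex, pi_j real >= 0
   (includes constants, for s = [::], and the zero polynomial, for C = 0). *)
Definition Pplus (R : rcfType) (p : {poly R[i]}) : Prop :=
  exists (c : R[i]) (s : seq R),
    all (fun x => 0 <= x) s /\
    p = c *: \prod_(x <- s) ('X + (x%:C)%:P).

Definition Delta (R : rcfType) (theta omega : R) (f : {poly R[i]}) : {poly R[i]} :=
  ((theta%:C)%:P + (omega%:C) *: 'X) * f^`() + 'X * f^`(2).

(* phi(Delta) f = sum_k phi^(k)(0)/k! Delta^k f ;  phi^(k)(0)/k! is the
   k-th coefficient of phi, i.e. phi^`N(k).[0]. *)
Definition phiDelta (R : rcfType) (theta omega : R) (phi f : {poly R[i]}) : {poly R[i]} :=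
  \sum_(k < size phi) (phi^`N(k)).[0] *: iter k (Delta theta omega) f.

(* Since [phi = c * prod_j ('X + pi_j)] and the operators [Delta + pi_j]
   commute, [phi(Delta)] is [c] times their composite, so it suffices that
   [Delta + pi] preserves P^+ for every [pi >= 0].  For
   [f = prod_j ('X + x_j)], the polynomial [g = Delta f + pi f] has nonnegative
   coefficients, hence is real and has no positive root; it remains to rule
   out roots [z] with [Im z > 0].  There [f z] and [f' z] do not vanish and,
   writing [f' = c' * prod_k ('X + y_k)] (again in P^+, by the same argument),
   [g z / f' z = theta + omega z + sum_k z / (z + y_k)
                 + pi / sum_j 1 / (z + x_j)],
   a sum of terms with nonnegative imaginary part, which can only vanish when
   [theta = omega = pi = 0] and [f'] is constant, that is when [g = 0]. *)

From HB Require Import structures.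
From mathcomp Require Import all_boot all_order all_algebra.
From mathcomp Require Import complex.
From mathcomp Require Import ring lra.
Import Order.TTheory GRing.Theory Num.Theory.
Set Implicit Arguments. Unset Strict Implicit. Unset Printing Implicit Defensive.
Local Open Scope ring_scope.
Local Open Scope complex_scope.

Local Notation prod_XaddR s := (\prod_(x <- s) ('X + (x%:C)%:P)).

Section OperatorCalculus.
Variables (R : rcfType) (theta omega : R).
Local Notation D := (Delta theta omega).
Local Notation phiD := (phiDelta theta omega).

Lemma DeltaD (f g : {poly R[i]}) : D (f + g) = D f + D g.
Proof. by rewrite /Delta derivD derivnD !mulrDr addrACA. Qed.

Lemma DeltaZ (a : R[i]) (f : {poly R[i]}) : D (a *: f) = a *: D f.
Proof. by rewrite /Delta derivZ derivnZ -!scalerAr scalerDr. Qed.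

Lemma iter_DeltaD k (f g : {poly R[i]}) :
  iter k D (f + g) = iter k D f + iter k D g.
Proof. by elim: k => //= k ->; rewrite DeltaD. Qed.

Lemma iter_DeltaZ k (a : R[i]) (f : {poly R[i]}) :
  iter k D (a *: f) = a *: iter k D f.
Proof. by elim: k => //= k ->; rewrite DeltaZ. Qed.

Lemma phiDelta_sum n (p f : {poly R[i]}) : (size p <= n)%N ->
  phiD p f = \sum_(k < n) p`_k *: iter k D f.
Proof.
move=> le_p_n; rewrite /phiDelta.
under eq_bigr do rewrite horner_coef0 coef_nderivn addn0 binn mulr1n.
rewrite (big_ord_widen n (fun k => p`_k *: iter k D f) le_p_n).
rewrite [RHS](bigID (fun k : 'I_n => (k < size p)%N)) /=.
rewrite [X in _ = _ + X]big1 ?addr0 // => k.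
by rewrite -leqNgt => /(nth_default 0) ->; rewrite scale0r.
Qed.

Lemma phiDeltaDr (p f g : {poly R[i]}) : phiD p (f + g) = phiD p f + phiD p g.
Proof.
rewrite /phiDelta -big_split; apply: eq_bigr => k _.
by rewrite iter_DeltaD scalerDr.
Qed.

Lemma phiDeltaZr (p : {poly R[i]}) (a : R[i]) (f : {poly R[i]}) :
  phiD p (a *: f) = a *: phiD p f.
Proof.
rewrite /phiDelta scaler_sumr; apply: eq_bigr => k _.
by rewrite iter_DeltaZ !scalerA mulrC.
Qed.

Lemma phiDeltaZl a (p f : {poly R[i]}) : phiD (a *: p) f = a *: phiD p f.
Proof.
rewrite (phiDelta_sum _ (size_scale_leq a p)) (phiDelta_sum _ (leqnn _)).
by rewrite scaler_sumr; apply: eq_bigr => k _; rewrite coefZ scalerA.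
Qed.

Lemma phiDelta1 (f : {poly R[i]}) : phiD 1 f = f.
Proof.
by rewrite (phiDelta_sum _ (leqnn _)) size_poly1 big_ord1 coef1 scale1r.
Qed.

Lemma phiDelta_mul_XaddC (p : {poly R[i]}) (a : R[i]) (f : {poly R[i]}) :
  phiD (p * ('X + a%:P)) f = phiD p (D f + a *: f).
Proof.
have le_pX : (size (p * ('X + a%:P))%R <= (size p).+1)%N.
  by rewrite (leq_trans (size_polyMleq _ _)) // size_XaddC addn2.
rewrite (phiDelta_sum _ le_pX) mulrDr (mulrC p a%:P) mul_polyC.
under eq_bigr do rewrite coefD scalerDl.
rewrite big_split /= big_ord_recl coefMX eqxx scale0r add0r.
rewrite phiDeltaDr phiDeltaZr (phiDelta_sum _ (leqnn _)); congr (_ + _).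
  by apply: eq_bigr => k _; rewrite coefMX /= -iterSr.
rewrite (phiDelta_sum _ (leqnSn _)) scaler_sumr.
by apply: eq_bigr => k _; rewrite coefZ scalerA.
Qed.

End OperatorCalculus.

Section UpperHalfPlane.
Variable R : rcfType.
Local Notation Re := (@complex.Re R).
Local Notation Im := (@complex.Im R).
Implicit Types (u z : R[i]) (x y : R).

Lemma Im_addR u x : Im (u + x%:C) = Im u.
Proof. by case: u => a b /=; rewrite addr0. Qed.

Lemma Im_realM x u : Im (x%:C * u) = x * Im u.
Proof. by case: u => a b /=; rewrite mul0r addr0. Qed.

Lemma Im_inv u : Im u^-1 = - Im u / (Re u ^+ 2 + Im u ^+ 2).
Proof. by case: u => a b /=; rewrite mulNr. Qed.

Lemma Im_inv_lt0 u : 0 < Im u -> Im u^-1 < 0.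
Proof.
move=> Im_gt0; rewrite Im_inv mulNr oppr_lt0 divr_gt0 //.
by rewrite ltr_wpDl ?sqr_ge0 ?exprn_gt0.
Qed.

Lemma Im_inv_gt0 u : Im u < 0 -> 0 < Im u^-1.
Proof.
move=> Im_lt0; rewrite -oppr_lt0 -raddfN -invrN Im_inv_lt0 //.
by rewrite raddfN oppr_gt0.
Qed.

Lemma Im_gt0_addR_neq0 z x : 0 < Im z -> z + x%:C != 0.
Proof.
move=> Im_gt0; apply: contraTneq Im_gt0 => zx0.
by rewrite -(Im_addR z x) zx0 ltxx.
Qed.

Lemma Im_div_addR z y : 0 < Im z ->
  Im (z / (z + y%:C)) = - y * Im (z + y%:C)^-1.
Proof.
move=> Im_gt0; have nz := Im_gt0_addR_neq0 y Im_gt0.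
have -> : z / (z + y%:C) = 1 + (- y)%:C * (z + y%:C)^-1.
  by rewrite raddfN /= mulNr -{1}(addrK y%:C z) mulrBl mulfV.
by rewrite raddfD /= Im_realM add0r.
Qed.

End UpperHalfPlane.

Section LogarithmicDerivative.
Variable R : rcfType.
Local Notation Im := (@complex.Im R).
Implicit Types (z : R[i]) (s : seq R).

Definition logder s z : R[i] := \sum_(x <- s) (z + x%:C)^-1.

Lemma horner_prod_XaddR_neq0 s z : 0 < Im z -> (prod_XaddR s).[z] != 0.
Proof.
move=> Im_gt0; rewrite horner_prod prodf_seq_neq0; apply/allP => x _ /=.
by rewrite hornerD hornerX hornerC Im_gt0_addR_neq0.
Qed.

Lemma horner_deriv_prod_XaddR s z : 0 < Im z ->
  (prod_XaddR s)^`().[z] = (prod_XaddR s).[z] * logder s z.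
Proof.
move=> Im_gt0; rewrite /logder; elim: s => [|x s IHs].
  by rewrite !big_nil -polyC1 derivC horner0 mulr0.
rewrite !big_cons derivM derivD derivX derivC addr0 mul1r !hornerE IHs.
have := Im_gt0_addR_neq0 x Im_gt0; set P := (prod_XaddR s).[z].
by move=> nz; field.
Qed.

Lemma Im_logder_lt0 s z : s != [::] -> 0 < Im z -> Im (logder s z) < 0.
Proof.
case: s => [//|x s] _ Im_gt0; rewrite /logder raddf_sum big_cons /=.
rewrite ltr_wnDr ?Im_inv_lt0 ?Im_addR // big_seq sumr_le0 // => y _.
by rewrite ltW ?Im_inv_lt0 ?Im_addR.
Qed.

Lemma Im_mul_logder s z : 0 < Im z ->
  Im (z * logder s z) = \sum_(y <- s) - y * Im (z + y%:C)^-1.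
Proof.
move=> Im_gt0; rewrite /logder mulr_sumr raddf_sum /=.
by apply: eq_bigr => y _; rewrite Im_div_addR.
Qed.

Lemma mul_logder_nseq0 n z : z != 0 -> z * logder (nseq n 0) z = n%:R.
Proof.
move=> z_neq0; rewrite /logder; elim: n => [|n IHn]; first by rewrite big_nil mulr0.
by rewrite big_cons mulrDr IHn rmorph0 addr0 mulfV // mulrS.
Qed.

End LogarithmicDerivative.

Section PplusCriterion.
Variable R : rcfType.
Local Notation Re := (@complex.Re R).
Local Notation Im := (@complex.Im R).
Implicit Types (p q f : {poly R[i]}) (z : R[i]) (s : seq R).

(* On [R[i]], [0 <= c] means that [c] is a nonnegative real. *)
Definition nneg_coef p := forall k, 0 <= p`_k.

Lemma nneg_coefD p q : nneg_coef p -> nneg_coef q -> nneg_coef (p + q).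
Proof. by move=> p_ge0 q_ge0 k; rewrite coefD addr_ge0. Qed.

Lemma nneg_coefM p q : nneg_coef p -> nneg_coef q -> nneg_coef (p * q).
Proof.
by move=> p_ge0 q_ge0 k; rewrite coefM sumr_ge0 // => j _; rewrite mulr_ge0.
Qed.

Lemma nneg_coefC (c : R[i]) : 0 <= c -> nneg_coef c%:P.
Proof. by move=> c_ge0 k; rewrite coefC; case: eqP. Qed.

Lemma nneg_coefX : nneg_coef 'X.
Proof. by move=> k; rewrite coefX; case: eqP. Qed.

Lemma nneg_coefZ (c : R[i]) p : 0 <= c -> nneg_coef p -> nneg_coef (c *: p).
Proof. by move=> c_ge0 p_ge0 k; rewrite coefZ mulr_ge0. Qed.

Lemma nneg_coef_deriv p : nneg_coef p -> nneg_coef p^`().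
Proof. by move=> p_ge0 k; rewrite coef_deriv mulrn_wge0. Qed.

Lemma Pplus0 : Pplus (0 : {poly R[i]}).
Proof. by exists 0, [::]; rewrite scale0r. Qed.

Lemma PplusZ (c : R[i]) p : Pplus p -> Pplus (c *: p).
Proof. by case=> c' [s [s_ge0 ->]]; exists (c * c'), s; rewrite scalerA. Qed.

Lemma Pplus_roots_le0 p : p != 0 -> (forall z, root p z -> z <= 0) -> Pplus p.
Proof.
move=> p_neq0 roots_le0; have [r def_p] := closed_field_poly_normal p.
have r_le0 z : z \in r -> z <= 0.
  move=> zr; apply: roots_le0.
  by rewrite def_p rootZ ?lead_coef_eq0 ?root_prod_XsubC.
exists (lead_coef p), [seq - Re z | z <- r]; split.
  by apply/allP => _ /mapP [z /r_le0 + ->]; rewrite lecE oppr_ge0 => /andP [].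
rewrite {1}def_p big_map; congr (_ *: _); apply: eq_big_seq => z /r_le0.
case: z => a b; rewrite lecE /= => /andP [/eqP <- _].
rewrite -polyCN; congr ('X + _%:P).
by apply/eqP; rewrite eq_complex /= oppr0 !eqxx.
Qed.

Lemma nneg_coef_conj p : nneg_coef p -> map_poly conjc p = p.
Proof.
move=> p_ge0; apply/polyP => i; rewrite coef_map /=.
have := ger0_Im (p_ge0 i); case: p`_i => a b /= ->.
by rewrite oppr0.
Qed.

Lemma nneg_coef_horner_gt0 p z :
  nneg_coef p -> p != 0 -> 0 < z -> 0 < p.[z].
Proof.
move=> p_ge0 p_neq0 z_gt0.
have size_p : size p = (size p).-1.+1 by rewrite prednK // size_poly_gt0.
rewrite horner_coef size_p big_ord_recr /= -lead_coefE ltr_wpDl //.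
  by apply: sumr_ge0 => i _; rewrite mulr_ge0 // exprn_ge0 // ltW.
by rewrite mulr_gt0 ?exprn_gt0 // lt_def lead_coef_eq0 p_neq0 lead_coefE p_ge0.
Qed.

Lemma Pplus_criterion p : nneg_coef p ->
  (forall z, 0 < Im z -> root p z -> p = 0) -> Pplus p.
Proof.
move=> p_ge0 upper_roots; have [->|p_neq0] := eqVneq p 0; first exact: Pplus0.
apply: Pplus_roots_le0 => // w pw0.
have no_upper_root z : 0 < Im z -> ~~ root p z.
  by move=> Im_gt0; apply: contra_neqN p_neq0; exact: upper_roots.
case: (ltgtP (Im w) 0) => [Im_lt0 | Im_gt0 | Im0].
- have Im_conj_gt0 : 0 < Im w^*.
    by case: w Im_lt0 {pw0} => a b /=; rewrite oppr_gt0.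
  have := no_upper_root _ Im_conj_gt0.
  by rewrite -complex_root_conj nneg_coef_conj ?pw0.
- by have := no_upper_root w Im_gt0; rewrite pw0.
- rewrite lecE Im0 eqxx leNgt; apply/negP => Re_gt0.
  have w_gt0 : 0 < w by rewrite ltcE Im0 eqxx.
  by have := nneg_coef_horner_gt0 p_ge0 p_neq0 w_gt0; rewrite (rootP pw0) ltxx.
Qed.

Lemma nneg_coef_prod_XaddR s :
  all (fun x => 0 <= x) s -> nneg_coef (prod_XaddR s).
Proof.
elim: s => [_|x s IHs /andP [x_ge0 s_ge0]].
  by rewrite big_nil -polyC1; apply/nneg_coefC/ler01.
rewrite big_cons; apply: nneg_coefM _ (IHs s_ge0).
by apply: nneg_coefD nneg_coefX _; apply: nneg_coefC; rewrite ler0c.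
Qed.

Lemma Pplus_deriv f : Pplus f -> Pplus f^`().
Proof.
case=> c [s [s_ge0 ->]]; rewrite derivZ; apply: PplusZ.
apply: Pplus_criterion => [|z Im_gt0].
  exact/nneg_coef_deriv/nneg_coef_prod_XaddR.
have [-> _|s_neq0] := eqVneq s [::]; first by rewrite big_nil -polyC1 derivC.
rewrite /root horner_deriv_prod_XaddR // mulf_eq0.
rewrite (negPf (horner_prod_XaddR_neq0 _ Im_gt0)) /= => /eqP logder0.
by have := Im_logder_lt0 s_neq0 Im_gt0; rewrite logder0 ltxx.
Qed.

End PplusCriterion.

Arguments nneg_coefX {R}.

Section ShiftedDelta.
Variables (R : rcfType) (theta omega pi : R).
Local Notation Im := (@complex.Im R).
Hypotheses (theta_ge0 : 0 <= theta) (omega_ge0 : 0 <= omega) (pi_ge0 : 0 <= pi).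
Implicit Types (s : seq R) (z : R[i]) (f : {poly R[i]}).
Local Notation Delta_shift f := (Delta theta omega f + pi%:C *: f).

Lemma horner_Delta_shift f z : (Delta_shift f).[z] =
  (theta%:C + omega%:C * z) * f^`().[z] + z * f^`()^`().[z] + pi%:C * f.[z].
Proof. by rewrite /Delta derivnS derivn1 !hornerE. Qed.

Lemma nneg_coef_Delta_shift f : nneg_coef f -> nneg_coef (Delta_shift f).
Proof.
move=> f_ge0; have f'_ge0 := nneg_coef_deriv f_ge0.
rewrite /Delta derivnS derivn1; apply: nneg_coefD.
  apply: nneg_coefD; last exact/nneg_coefM/nneg_coef_deriv/f'_ge0/nneg_coefX.
  apply: nneg_coefM f'_ge0; apply: nneg_coefD.
    by apply: nneg_coefC; rewrite ler0c.
  by apply: nneg_coefZ nneg_coefX; rewrite ler0c.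
by apply: nneg_coefZ; rewrite ?ler0c.
Qed.

Lemma Delta_shift_quotient_eq0 s s' z :
  all (fun y => 0 <= y) s' -> s != [::] -> 0 < Im z ->
  theta%:C + omega%:C * z + z * logder s' z + pi%:C / logder s z = 0 ->
  [/\ theta = 0, omega = 0, pi = 0 & s' = [::]].
Proof.
move=> /allP s'_ge0 s_neq0 Im_gt0 quotient0.
set S := \sum_(y <- s') - y * Im (z + y%:C)^-1.
have Im_inv_logder_gt0 : 0 < Im (logder s z)^-1.
  exact/Im_inv_gt0/Im_logder_lt0.
have term_ge0 y : y \in s' -> 0 <= - y * Im (z + y%:C)^-1.
  move=> /s'_ge0 y_ge0; rewrite mulNr -mulrN mulr_ge0 // oppr_ge0 ltW //.
  by rewrite Im_inv_lt0 // Im_addR.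
have S_ge0 : 0 <= S by rewrite /S big_seq sumr_ge0.
have Im_quotient0 : omega * Im z + S + pi * Im (logder s z)^-1 = 0.
  have := congr1 Im quotient0; rewrite !raddfD /= !Im_realM Im_mul_logder //.
  by rewrite add0r.
have [omega_Im0 S0 pi_Im0] :
    [/\ omega * Im z = 0, S = 0 & pi * Im (logder s z)^-1 = 0].
  have := mulr_ge0 omega_ge0 (ltW Im_gt0).
  have := mulr_ge0 pi_ge0 (ltW Im_inv_logder_gt0).
  by split; lra.
have omega0 : omega = 0.
  by move/eqP: omega_Im0; rewrite mulf_eq0 (gt_eqF Im_gt0) orbF => /eqP.
have pi0 : pi = 0.
  by move/eqP: pi_Im0; rewrite mulf_eq0 (gt_eqF Im_inv_logder_gt0) orbF => /eqP.
have s'0 y : y \in s' -> y = 0.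
  move=> y_s'; move/eqP: S0; rewrite /S big_seq psumr_eq0 => [|x]; last first.
    exact: term_ge0.
  have Im_neq0 : Im (z + y%:C)^-1 != 0.
    by rewrite lt_eqF // Im_inv_lt0 // Im_addR.
  move=> /allP /(_ y y_s'); rewrite y_s' mulf_eq0 oppr_eq0 (negPf Im_neq0).
  by rewrite orbF => /eqP.
have z_neq0 : z != 0 by apply: contraTneq Im_gt0 => ->; rewrite ltxx.
have logder_s' : z * logder s' z = (size s')%:R.
  have -> : s' = nseq (size s') 0 by apply/all_pred1P/allP => y /s'0 ->/=.
  by rewrite mul_logder_nseq0 // size_nseq.
move: quotient0; rewrite omega0 pi0 logder_s' !rmorph0 !mul0r !addr0.
rewrite -(rmorph_nat (real_complex R)) -rmorphD -(rmorph0 (real_complex R)).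
move=> /complexI /eqP; rewrite paddr_eq0 // => /andP [/eqP theta0].
by rewrite pnatr_eq0 size_eq0 => /eqP.
Qed.

Lemma Delta_shift_prod_upper_root s z : all (fun x => 0 <= x) s -> 0 < Im z ->
  root (Delta_shift (prod_XaddR s)) z -> Delta_shift (prod_XaddR s) = 0.
Proof.
move=> s_ge0 Im_gt0 /rootP g_root; set g := prod_XaddR s in g_root *.
have [s0|s_neq0] := eqVneq s [::].
  have Delta1 : Delta theta omega 1 = 0.
    by rewrite /Delta derivnS derivn1 -polyC1 !derivC !mulr0 addr0.
  move: g_root; rewrite /g s0 big_nil Delta1 !add0r hornerZ hornerC mulr1 => ->.
  by rewrite scale0r.
have [c [s' [s'_ge0 def_g']]] : Pplus g^`().
  by apply: Pplus_deriv; exists 1, s; rewrite scale1r.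
have g'_z : g^`().[z] = g.[z] * logder s z := horner_deriv_prod_XaddR s Im_gt0.
have logder_neq0 : logder s z != 0.
  by apply: contraTneq (Im_logder_lt0 s_neq0 Im_gt0) => ->; rewrite ltxx.
have g'_z_neq0 : g^`().[z] != 0.
  by rewrite g'_z mulf_neq0 // horner_prod_XaddR_neq0.
have g''_z : g^`()^`().[z] = g^`().[z] * logder s' z.
  by rewrite def_g' derivZ !hornerZ horner_deriv_prod_XaddR // mulrA.
have quotient0 :
    theta%:C + omega%:C * z + z * logder s' z + pi%:C / logder s z = 0.
  apply: (mulIf g'_z_neq0); rewrite mul0r -[RHS]g_root horner_Delta_shift g''_z.
  have -> : g.[z] = g^`().[z] / logder s z by rewrite g'_z mulfK.
  by ring.
have [theta0 omega0 pi0 s'0] :=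
  Delta_shift_quotient_eq0 s'_ge0 s_neq0 Im_gt0 quotient0.
rewrite /Delta derivnS derivn1 def_g' s'0 big_nil derivZ -polyC1 derivC scaler0.
by rewrite theta0 omega0 pi0 !rmorph0 !(scale0r, add0r, mul0r, mulr0, addr0).
Qed.

Lemma Pplus_Delta_shift f : Pplus f -> Pplus (Delta_shift f).
Proof.
case=> c [s [s_ge0 ->]].
rewrite DeltaZ scalerA (mulrC pi%:C) -scalerA -scalerDr.
apply/PplusZ/Pplus_criterion => [|z Im_gt0].
  exact/nneg_coef_Delta_shift/nneg_coef_prod_XaddR.
exact: Delta_shift_prod_upper_root.
Qed.

End ShiftedDelta.

Unset Implicit Arguments.

Theorem lemma2 (R : rcfType) (theta omega : R) (phi f : {poly R[i]}) :
  0 <= theta -> 0 <= omega -> Pplus phi -> Pplus f ->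
  Pplus (phiDelta theta omega phi f).
Proof.
move=> theta_ge0 omega_ge0 [c [s [s_ge0 ->]]] f_Pplus.
rewrite phiDeltaZl; apply: PplusZ.
elim: s s_ge0 f f_Pplus => [_ | x s IHs /andP [x_ge0 s_ge0]] f f_Pplus.
  by rewrite big_nil phiDelta1.
rewrite big_cons mulrC phiDelta_mul_XaddC; apply: IHs => //.
exact: Pplus_Delta_shift.
Qed.
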